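(* For any integer $m$ and $-\pi<\arg\zeta<\pi$, $$S_{-1,0}(\zeta\mathrm{e}^{-m\pi i})=S_{-1,0}(\zeta)+K''_+H^{(1)}_0(\zeta)+K''_-H^{(2)}_0(\zeta),\qquad K''_\pm=-\frac{m\pi^2(m\pm1)}{4}.$$
   Context: $J_0,Y_0$ are Bessel functions of order $0$, $H^{(1)}_0=J_0+iY_0$, $H^{(2)}_0=J_0-iY_0$, $\psi=\Gamma'/\Gamma$. The Lommel function $S_{-1,0}$ is defined by $S_{-1,0}(\zeta)=\frac12\sum_{k\ge0}\frac{(-1)^k(\zeta/2)^{2k}}{(k!)^2}\big\{[\log\frac{\zeta}{2}-\psi(k+1)]^2-\frac12\psi'(k+1)+\frac{\pi^2}{4}\big\}$. Right-hand side functions are on the principal branch $-\pi<\arg\zeta<\pi$; $g(\zeta\mathrm{e}^{-m\pi i})$ is the value of the analytic continuation of the principal branch at the point over $\zeta$ with argument $\arg\zeta-m\pi$. *)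

From Stdlib Require Import Reals ZArith.
From Coquelicot Require Import Coquelicot.
Open Scope R_scope.

Definition cexp (w : C) : C :=
  (exp (fst w) * cos (snd w), exp (fst w) * sin (snd w)).

Definition CSeries (a : nat -> C) : C :=
  (Series (fun n => fst (a n)), Series (fun n => snd (a n))).

Definition euler_gamma : R :=
  real (Lim_seq (fun n => sum_f_R0 (fun j => / INR (S j)) n - ln (INR (S n)))).

Definition digamma (x : R) : R :=
  - euler_gamma + Series (fun n => / INR (S n) - / (INR n + x)).

Definition trigamma (x : R) : R :=
  Series (fun n => / (INR n + x) ^ 2).

(* Functions on the Riemann surface of the logarithm, in the logarithmic
   coordinate w: the point over zeta with a chosen argument is w = log|zeta| + i arg zeta,
   so zeta = cexp w, (zeta/2)^(2k) = cexp (2k w) / 4^k, and log(zeta/2) = w - ln 2. *)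

Definition coefk (k : nat) : R := (-1) ^ k / (4 ^ k * (INR (fact k)) ^ 2).

Definition termk (w : C) (k : nat) : C :=
  Cmult (RtoC (coefk k)) (cexp (Cmult (RtoC (2 * INR k)) w)).

Definition logzeta2 (w : C) : C := Cminus w (RtoC (ln 2)).

Definition J0_log (w : C) : C := CSeries (termk w).

Definition Y0_log (w : C) : C :=
  Cmult (RtoC (2 / PI))
    (CSeries (fun k => Cmult (termk w k)
                        (Cminus (logzeta2 w) (RtoC (digamma (INR k + 1)))))).

Definition H1_log (w : C) : C := Cplus (J0_log w) (Cmult Ci (Y0_log w)).
Definition H2_log (w : C) : C := Cminus (J0_log w) (Cmult Ci (Y0_log w)).

Definition Sm10_log (w : C) : C :=
  Cmult (RtoC (1 / 2))
    (CSeries (fun k =>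
       Cmult (termk w k)
         (Cplus (Cmult (Cminus (logzeta2 w) (RtoC (digamma (INR k + 1))))
                       (Cminus (logzeta2 w) (RtoC (digamma (INR k + 1)))))
                (RtoC (- trigamma (INR k + 1) / 2 + PI ^ 2 / 4))))).

(* Value of (the analytic continuation of the principal branch of) g at the
   point over zeta = r e^{i theta} with argument theta (r > 0).  For
   -pi < theta < pi this is the principal-branch value g(zeta). *)
Definition at_arg (g : C -> C) (r theta : R) : C := g (ln r, theta).

Definition Kpp (m : Z) : R := - (IZR m * PI ^ 2 * (IZR m + 1)) / 4.
Definition Kpm (m : Z) : R := - (IZR m * PI ^ 2 * (IZR m - 1)) / 4.

From Stdlib Require Import Reals ZArith Lra Lia.
From Coquelicot Require Import Coquelicot.
Open Scope R_scope.

(* In the logarithmic coordinate w = log zeta, moving to the point with argument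
   arg zeta - m pi replaces w by w - i m pi.  The power factors (zeta/2)^(2k) depend only on
   e^(2kw) and are unchanged, while log(zeta/2) drops by i m pi.  Expanding the square in the
   series of S_{-1,0}, with T_k = (-1)^k (zeta/2)^(2k) / (k!)^2, the shift contributes
     -i m pi sum_k T_k (log(zeta/2) - psi(k+1)) - (m pi)^2/2 sum_k T_k
     = -(i m pi^2/2) Y_0(zeta) - (m^2 pi^2/2) J_0(zeta),
   which is K''_+ H^(1)_0 + K''_- H^(2)_0.  Splitting the series is legitimate because every
   summand is dominated by C q^k / k!: psi(k+1) grows linearly and psi'(k+1) is bounded.
   The identity holds for every real theta. *)

Definition ex_CSeries (a : nat -> C) : Prop :=
  ex_series (fun n => fst (a n)) /\ ex_series (fun n => snd (a n)).

Lemma CSeries_ext (a b : nat -> C) : (forall n, a n = b n) -> CSeries a = CSeries b.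
Proof. intros H. unfold CSeries. f_equal; apply Series_ext; intros n; now rewrite H. Qed.

Lemma CSeries_plus (a b : nat -> C) : ex_CSeries a -> ex_CSeries b ->
  CSeries (fun n => Cplus (a n) (b n)) = Cplus (CSeries a) (CSeries b).
Proof.
  intros [Ha1 Ha2] [Hb1 Hb2]. unfold CSeries, Cplus; simpl.
  now rewrite (Series_plus _ _ Ha1 Hb1), (Series_plus _ _ Ha2 Hb2).
Qed.

Lemma CSeries_scal_l (c : C) (a : nat -> C) : ex_CSeries a ->
  CSeries (fun n => Cmult c (a n)) = Cmult c (CSeries a).
Proof.
  intros [H1 H2]. destruct c as [c1 c2]. unfold CSeries, Cmult; simpl.
  rewrite (Series_minus (fun n => c1 * fst (a n)) (fun n => c2 * snd (a n))),
    (Series_plus (fun n => c1 * snd (a n)) (fun n => c2 * fst (a n))), !Series_scal_l;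
    try reflexivity; now apply (ex_series_scal_l (K := R_AbsRing) (V := R_NormedModule)).
Qed.

Lemma ex_CSeries_plus (a b : nat -> C) : ex_CSeries a -> ex_CSeries b ->
  ex_CSeries (fun n => Cplus (a n) (b n)).
Proof. intros [Ha1 Ha2] [Hb1 Hb2]. split; now apply (ex_series_plus (V := R_NormedModule)). Qed.

Lemma ex_CSeries_scal_l (c : C) (a : nat -> C) : ex_CSeries a ->
  ex_CSeries (fun n => Cmult c (a n)).
Proof.
  intros [H1 H2]. destruct c as [c1 c2].
  assert (Hs : forall (u : nat -> R) (x : R), ex_series u -> ex_series (fun n => x * u n))
    by (intros u x; apply (ex_series_scal_l (K := R_AbsRing) (V := R_NormedModule))).
  split; simpl; [apply (ex_series_minus (V := R_NormedModule)) |
                 apply (ex_series_plus (V := R_NormedModule))]; auto.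
Qed.

Lemma ex_exp_series (q : R) : ex_series (fun n => q ^ n / INR (fact n)).
Proof.
  exists (exp q). eapply is_series_ext; [| apply (is_exp_Reals q)].
  intros n. unfold scal; simpl. unfold mult; simpl. now rewrite pow_n_pow.
Qed.

Lemma ex_CSeries_exp_bound (a : nat -> C) (K q : R) :
  (forall n, Cmod (a n) <= K * (q ^ n / INR (fact n))) -> ex_CSeries a.
Proof.
  intros Ha.
  assert (Hb := ex_series_scal_l (K := R_AbsRing) (V := R_NormedModule) K _ (ex_exp_series q)).
  assert (Hre : forall n, Rabs (fst (a n)) <= K * (q ^ n / INR (fact n))
                       /\ Rabs (snd (a n)) <= K * (q ^ n / INR (fact n))).
  { intros n. pose proof (Rmax_Cmod (a n)). pose proof (Ha n).
    pose proof (Rmax_l (Rabs (fst (a n))) (Rabs (snd (a n)))).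
    pose proof (Rmax_r (Rabs (fst (a n))) (Rabs (snd (a n)))). lra. }
  split; eapply (ex_series_le (K := R_AbsRing) (V := R_CompleteNormedModule)); try exact Hb;
    intros n; apply Hre.
Qed.

(* No convergence hypothesis is needed: [Series] is the [Lim_seq] of the partial sums,
   which is monotone even when the limit does not exist. *)
Lemma Series_between (a : nat -> R) (lo hi : R) :
  (forall N, lo <= sum_f_R0 a N <= hi) -> lo <= Series a <= hi.
Proof.
  intros H. unfold Series.
  assert (Hlo : Rbar_le (Lim_seq (fun _ => lo)) (Lim_seq (sum_n a))).
  { apply Lim_seq_le_loc. exists O. intros n _. rewrite sum_n_Reals. apply H. }
  assert (Hhi : Rbar_le (Lim_seq (sum_n a)) (Lim_seq (fun _ => hi))).
  { apply Lim_seq_le_loc. exists O. intros n _. rewrite sum_n_Reals. apply H. }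
  rewrite Lim_seq_const in Hlo, Hhi.
  destruct (Lim_seq (sum_n a)); simpl in *; try contradiction; lra.
Qed.

(* Strengthened from [<= 2] so that the induction goes through by telescoping. *)
Lemma sum_inv_sq_le (N : nat) :
  sum_f_R0 (fun n => / (INR n + 1) ^ 2) N <= 2 - / (INR N + 1).
Proof.
  induction N as [|N IH].
  - simpl. rewrite Rplus_0_l, Rmult_1_r, Rmult_1_r, Rinv_1. lra.
  - rewrite tech5, S_INR. pose proof (pos_INR N).
    set (x := INR N + 1) in *. assert (Hx : 1 <= x) by (unfold x; lra). clearbody x.
    assert (E : / (x + 1) ^ 2 + / (x + 1) - / x = - / (x * (x + 1) ^ 2))
      by (field; lra).
    assert (0 < / (x * (x + 1) ^ 2)) by (apply Rinv_0_lt_compat; nra).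
    lra.
Qed.

Lemma trigamma_succ_between (k : nat) : 0 <= trigamma (INR k + 1) <= 2.
Proof.
  unfold trigamma. apply Series_between. intros N. pose proof (pos_INR k). split.
  - apply cond_pos_sum. intros n. pose proof (pos_INR n).
    left. apply Rinv_0_lt_compat, pow_lt. lra.
  - apply Rle_trans with (sum_f_R0 (fun n => / (INR n + 1) ^ 2) N).
    + apply sum_Rle. intros n _. pose proof (pos_INR n).
      apply Rinv_le_contravar; [apply pow_lt; lra | apply pow_incr; lra].
    + pose proof (sum_inv_sq_le N). pose proof (pos_INR N).
      assert (0 < / (INR N + 1)) by (apply Rinv_0_lt_compat; lra). lra.
Qed.

Lemma digamma_series_between (k : nat) :
  0 <= Series (fun n => / INR (S n) - / (INR n + (INR k + 1))) <= 2 * INR k.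
Proof.
  apply Series_between. intros N. pose proof (pos_INR k). split.
  - apply cond_pos_sum. intros n. rewrite S_INR. pose proof (pos_INR n).
    assert (/ (INR n + (INR k + 1)) <= / (INR n + 1)) by (apply Rinv_le_contravar; lra).
    lra.
  - apply Rle_trans with (sum_f_R0 (fun n => / (INR n + 1) ^ 2 * INR k) N).
    + apply sum_Rle. intros n _. rewrite S_INR. pose proof (pos_INR n).
      replace (INR n + (INR k + 1)) with (INR n + 1 + INR k) by ring.
      set (x := INR n + 1). assert (Hx : 1 <= x) by (unfold x; lra). clearbody x.
      replace (/ x - / (x + INR k)) with (INR k * / (x * (x + INR k))) by (field; lra).
      rewrite Rmult_comm. apply Rmult_le_compat_r; [lra|]. apply Rinv_le_contravar; nra.
    + rewrite <- scal_sum. pose proof (sum_inv_sq_le N). pose proof (pos_INR N).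
      assert (0 < / (INR N + 1)) by (apply Rinv_0_lt_compat; lra). nra.
Qed.

Lemma Rabs_digamma_succ_le (k : nat) :
  Rabs (digamma (INR k + 1)) <= Rabs euler_gamma + 2 * INR k.
Proof.
  unfold digamma. pose proof (digamma_series_between k).
  eapply Rle_trans; [apply Rabs_triang|]. rewrite Rabs_Ropp, (Rabs_pos_eq (Series _)); lra.
Qed.

Lemma Cmod_cexp (w : C) : Cmod (cexp w) = exp (fst w).
Proof.
  destruct w as [x y]. unfold Cmod, cexp; cbn [fst snd].
  pose proof (exp_pos x). pose proof (sin2_cos2 y). unfold Rsqr in *.
  replace ((exp x * cos y) ^ 2 + (exp x * sin y) ^ 2) with (exp x * exp x) by nra.
  now apply sqrt_square; lra.
Qed.

Lemma cexp_add_2PI_Z (w : C) (n : Z) : cexp (fst w, snd w + 2 * IZR n * PI) = cexp w.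
Proof.
  destruct w as [x y]; cbn [fst snd].
  assert (Hper : forall f : R -> R, (forall t k, f (t + 2 * INR k * PI) = f t) ->
            f (y + 2 * IZR n * PI) = f y).
  { intros f Hf. destruct (Z_le_gt_dec 0 n) as [Hn|Hn].
    - rewrite <- (Z2Nat.id n Hn), <- INR_IZR_INZ. apply Hf.
    - replace n with (- Z.of_nat (Z.to_nat (- n)))%Z by lia.
      rewrite opp_IZR, <- INR_IZR_INZ, <- (Hf _ (Z.to_nat (- n))). f_equal. ring. }
  unfold cexp; simpl. now rewrite (Hper cos cos_period), (Hper sin sin_period).
Qed.

Lemma exp_mult_INR (k : nat) (x : R) : exp (INR k * x) = exp x ^ k.
Proof.
  induction k as [|k IH].
  - now rewrite Rmult_0_l, exp_0.
  - rewrite S_INR, Rmult_plus_distr_r, Rmult_1_l, exp_plus, IH. simpl. ring.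
Qed.

Lemma Rabs_coefk_le (k : nat) : Rabs (coefk k) <= / INR (fact k).
Proof.
  pose proof (INR_fact_lt_0 k). pose proof (pow_R1_Rle 4 k ltac:(lra)).
  assert (1 <= INR (fact k)) by (apply (le_INR 1), lt_O_fact).
  unfold coefk, Rdiv. rewrite Rabs_mult, pow_1_abs, Rmult_1_l, Rabs_inv, Rabs_pos_eq by nra.
  apply Rinv_le_contravar; nra.
Qed.

Lemma Cmod_termk_le (w : C) (k : nat) :
  Cmod (termk w k) <= exp (2 * fst w) ^ k / INR (fact k).
Proof.
  unfold termk. rewrite Cmod_mult, Cmod_R, Cmod_cexp.
  replace (fst (Cmult (RtoC (2 * INR k)) w)) with (INR k * (2 * fst w))
    by (destruct w; simpl; ring).
  rewrite exp_mult_INR, Rmult_comm. unfold Rdiv.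
  apply Rmult_le_compat_l; [apply pow_le, Rlt_le, exp_pos | apply Rabs_coefk_le].
Qed.

Lemma termk_shift_PI (a theta : R) (m : Z) (k : nat) :
  termk (a, theta - IZR m * PI) k = termk (a, theta) k.
Proof.
  unfold termk. f_equal.
  rewrite <- (cexp_add_2PI_Z _ (Z.of_nat k * m)). f_equal.
  unfold Cmult, RtoC; cbn [fst snd]. rewrite mult_IZR, <- INR_IZR_INZ.
  f_equal; ring.
Qed.

Definition log_digamma (w : C) (k : nat) : C :=
  Cminus (logzeta2 w) (RtoC (digamma (INR k + 1))).

Definition lommel_const (k : nat) : R := - trigamma (INR k + 1) / 2 + PI ^ 2 / 4.

Lemma Cmod_log_digamma_le (w : C) (k : nat) :
  Cmod (log_digamma w k) <= (Cmod (logzeta2 w) + Rabs euler_gamma + 1) * 3 ^ k.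
Proof.
  unfold log_digamma, Cminus.
  eapply Rle_trans; [apply Cmod_triangle|]. rewrite Cmod_opp, Cmod_R.
  pose proof (Rabs_digamma_succ_le k). pose proof (Rle_pow_lin 2 k ltac:(lra)).
  pose proof (Cmod_ge_0 (logzeta2 w)). pose proof (Rabs_pos euler_gamma).
  replace (1 + 2) with 3 in * by ring.
  pose proof (pos_INR k).
  assert (0 <= (Cmod (logzeta2 w) + Rabs euler_gamma) * (3 ^ k - 1)) by (apply Rmult_le_pos; lra).
  lra.
Qed.

Lemma Rabs_lommel_const_le (k : nat) : Rabs (lommel_const k) <= 1 + PI ^ 2 / 4.
Proof.
  unfold lommel_const. pose proof (trigamma_succ_between k).
  assert (0 <= PI ^ 2) by apply pow2_ge_0.
  eapply Rle_trans; [apply Rabs_triang|].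
  rewrite (Rabs_pos_eq (PI ^ 2 / 4)) by lra.
  apply Rplus_le_compat_r, Rabs_le. lra.
Qed.

Lemma Cmod_mult_exp_geom_le (x y : C) (K1 K2 q1 q2 : R) (n : nat) :
  Cmod x <= K1 * (q1 ^ n / INR (fact n)) -> Cmod y <= K2 * q2 ^ n ->
  Cmod (Cmult x y) <= K1 * K2 * ((q1 * q2) ^ n / INR (fact n)).
Proof.
  intros Hx Hy. rewrite Cmod_mult.
  replace (K1 * K2 * ((q1 * q2) ^ n / INR (fact n)))
    with (K1 * (q1 ^ n / INR (fact n)) * (K2 * q2 ^ n))
    by (rewrite Rpow_mult_distr; field; apply INR_fact_neq_0).
  apply Rmult_le_compat; auto using Cmod_ge_0.
Qed.

Lemma ex_CSeries_termk_mult (w : C) (b : nat -> C) (K q : R) :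
  (forall k, Cmod (b k) <= K * q ^ k) -> ex_CSeries (fun k => (termk w k * b k)%C).
Proof.
  intros Hb. apply (ex_CSeries_exp_bound _ (1 * K) (exp (2 * fst w) * q)).
  intros k. apply Cmod_mult_exp_geom_le; [rewrite Rmult_1_l; apply Cmod_termk_le | apply Hb].
Qed.

Lemma ex_CSeries_termk (w : C) : ex_CSeries (termk w).
Proof.
  apply (ex_CSeries_exp_bound _ 1 (exp (2 * fst w))). intros k.
  rewrite Rmult_1_l. apply Cmod_termk_le.
Qed.

Lemma ex_CSeries_Y0_summand (w : C) :
  ex_CSeries (fun k => (termk w k * log_digamma w k)%C).
Proof. eapply ex_CSeries_termk_mult, Cmod_log_digamma_le. Qed.

Lemma ex_CSeries_Sm10_summand (w : C) :
  ex_CSeries (fun k =>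
    (termk w k * (log_digamma w k * log_digamma w k + RtoC (lommel_const k)))%C).
Proof.
  set (D := Cmod (logzeta2 w) + Rabs euler_gamma + 1).
  apply (ex_CSeries_termk_mult _ _ (D ^ 2 + (1 + PI ^ 2 / 4)) 9). intros k.
  pose proof (Cmod_log_digamma_le w k) as HL. pose proof (Rabs_lommel_const_le k).
  pose proof (Cmod_ge_0 (log_digamma w k)). pose proof (pow_R1_Rle 9 k ltac:(lra)).
  assert (0 <= (1 + PI ^ 2 / 4) * (9 ^ k - 1))
    by (pose proof (pow2_ge_0 PI); apply Rmult_le_pos; lra).
  assert (HL2 : Cmod (log_digamma w k) * Cmod (log_digamma w k) <= D ^ 2 * 9 ^ k).
  { replace (D ^ 2 * 9 ^ k) with ((D * 3 ^ k) * (D * 3 ^ k))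
      by (replace 9 with (3 * 3) by ring; rewrite Rpow_mult_distr; ring).
    apply Rmult_le_compat; auto. }
  eapply Rle_trans; [apply Cmod_triangle|]. rewrite Cmod_mult, Cmod_R. lra.
Qed.

Lemma log_digamma_shift (a theta M : R) (k : nat) :
  log_digamma (a, theta - M) k = (log_digamma (a, theta) k - Ci * RtoC M)%C.
Proof.
  unfold log_digamma, logzeta2, Cminus, Cplus, Copp, Cmult, RtoC, Ci; cbn [fst snd].
  f_equal; ring.
Qed.

Lemma mult_square_shift (t l c M : C) :
  (t * ((l - Ci * M) * (l - Ci * M) + c) = t * (l * l + c) - 2 * Ci * M * (t * l) - M * M * t)%C.
Proof.
  assert (Hi : (Ci * Ci = - 1)%C) by (apply injective_projections; simpl; ring).
  ring [Hi].
Qed.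

Lemma Sm10_log_shift_PI (a theta : R) (m : Z) :
  let M := RtoC (IZR m * PI) in
  Sm10_log (a, theta - IZR m * PI) =
  (Sm10_log (a, theta)
   - Ci * M * CSeries (fun k => termk (a, theta) k * log_digamma (a, theta) k)
   - RtoC (1 / 2) * (M * M) * CSeries (termk (a, theta)))%C.
Proof.
  intros M. set (w := (a, theta)).
  set (T := termk w). set (L := log_digamma w).
  set (Q := fun k => (L k * L k + RtoC (lommel_const k))%C).
  unfold Sm10_log at 1.
  rewrite (CSeries_ext _ (fun k =>
    (T k * Q k + (- (2 * Ci * M)) * (T k * L k) + (- (M * M)) * T k)%C)).
  2: { intros k. rewrite termk_shift_PI.
       fold (log_digamma (a, theta - IZR m * PI) k) (lommel_const k).
       rewrite log_digamma_shift, mult_square_shift. unfold Q, T, L, w, M, Cminus. ring. }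
  pose proof (ex_CSeries_termk w). pose proof (ex_CSeries_Y0_summand w).
  pose proof (ex_CSeries_Sm10_summand w).
  rewrite !CSeries_plus, !CSeries_scal_l;
    repeat apply ex_CSeries_plus; try apply ex_CSeries_scal_l; auto.
  change (Sm10_log w) with (RtoC (1 / 2) * CSeries (fun k => T k * Q k))%C.
  assert (Hhalf : (RtoC (1 / 2) * 2 = 1)%C)
    by (apply injective_projections; simpl; field).
  ring [Hhalf].
Qed.

Theorem lemma3p7 (m : Z) (r theta : R) (hr : 0 < r) (htheta : - PI < theta < PI) :
  at_arg Sm10_log r (theta - IZR m * PI) =
  Cplus (Cplus (at_arg Sm10_log r theta)
               (Cmult (RtoC (Kpp m)) (at_arg H1_log r theta)))
        (Cmult (RtoC (Kpm m)) (at_arg H2_log r theta)).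
Proof.
  unfold at_arg. rewrite Sm10_log_shift_PI.
  unfold H1_log, H2_log, J0_log, Y0_log, log_digamma, Kpp, Kpm.
  generalize (CSeries (termk (ln r, theta))) as J.
  generalize (CSeries (fun k => Cmult (termk (ln r, theta) k)
     (Cminus (logzeta2 (ln r, theta)) (RtoC (digamma (INR k + 1)))))) as Y.
  intros [y1 y2] [j1 j2].
  pose proof PI_RGT_0.
  unfold Cminus, Copp, Cmult, Cplus, RtoC, Ci; cbn [fst snd].
  f_equal; field; lra.
Qed.
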